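(* Let $n\ge1$ and, for $i=1,\dots,n$, let $c_i>0$, $m_i>0$, $d_i>0$, and let $a_i,\mu_i,b_i,\delta_i$ satisfy $0\le a_i<\mu_i<b_i$ and $0<\delta_i\le \frac{2(b_i-\mu_i)(\mu_i-a_i)}{b_i-a_i}$. Let $\mathcal{P}_{(\mu,\delta)}$ be the set of probability distributions $\mathbb{P}$ of random vectors $\vec D=(D_1,\dots,D_n)$ such that, for every $i$, $\mathbb{E}_{\mathbb{P}}[D_i]=\mu_i$, $\mathbb{E}_{\mathbb{P}}|D_i-\mu_i|=\delta_i$ and $\operatorname{supp}(D_i)\subseteq[a_i,b_i]$. For $\vec q=(q_1,\dots,q_n)$ let $$G(\vec q,\vec D)=\sum_{i=1}^n c_i\big(d_i(q_i-D_i)+(m_i+d_i)(D_i-q_i)^+\big).$$ Then, for every $\vec q$, the maximum $\max_{\mathbb{P}\in\mathcal{P}_{(\mu,\delta)}}\mathbb{E}_{\mathbb{P}}[G(\vec q,\vec D)]$ is attained by a distribution under which each $D_i$ has the three-point distribution with values $a_i,\mu_i,b_i$ and respective probabilities $$p_1^{(i)}=\frac{\delta_i}{2(\mu_i-a_i)},\quad p_2^{(i)}=1-\frac{\delta_i}{2(\mu_i-a_i)}-\frac{\delta_i}{2(b_i-\mu_i)},\quad p_3^{(i)}=\frac{\delta_i}{2(b_i-\mu_i)}.$$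
   Context: Here $x^+=\max(x,0)$. The parameters $c_i$, $m_i$ and $d_i$ are the purchase cost, mark-up and discount factor of item $i$, so its selling price is $c_i(1+m_i)$ and its salvage value is $c_i(1-d_i)$. *)

From HB Require Import structures.
From mathcomp Require Import all_boot all_order all_algebra.
From mathcomp Require Import all_classical all_reals all_analysis.
Set Implicit Arguments. Unset Strict Implicit. Unset Printing Implicit Defensive.
Import Order.TTheory GRing.Theory Num.Theory.
Local Open Scope classical_set_scope.
Local Open Scope ring_scope.

Definition Gcost {R : realType} {n : nat} (c m d q x : 'I_n -> R) : R :=
  \sum_(i < n) c i * (d i * (q i - x i) + (m i + d i) * Num.max (x i - q i) 0).

(* The random vector D = (D_1,...,D_n) on the probability space (T, P) has a
   law in P_(mu,delta): each D_i is measurable, E[D_i] = mu_i,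
   E|D_i - mu_i| = delta_i, and D_i in [a_i, b_i] almost surely. *)
Definition in_Pmudelta {R : realType} {n : nat} {dT : measure_display}
  {T : measurableType dT} (a mu b delta : 'I_n -> R)
  (P : probability T R) (D : 'I_n -> T -> R) : Prop :=
  forall i : 'I_n,
    [/\ measurable_fun setT (D i),
        (\int[P]_x (D i x)%:E = (mu i)%:E)%E,
        (\int[P]_x (`|D i x - mu i|)%:E = (delta i)%:E)%E &
        {ae P, forall x, a i <= D i x <= b i}].

Definition three_point {R : realType} {n : nat} {dT : measure_display}
  {T : measurableType dT} (a mu b delta : 'I_n -> R)
  (P : probability T R) (D : 'I_n -> T -> R) : Prop :=
  forall i : 'I_n,
    [/\ P (D i @^-1` [set a i]) = (delta i / (2 * (mu i - a i)))%:E,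
        P (D i @^-1` [set mu i]) =
          (1 - delta i / (2 * (mu i - a i)) - delta i / (2 * (b i - mu i)))%:E &
        P (D i @^-1` [set b i]) = (delta i / (2 * (b i - mu i)))%:E].

Definition exp_cost {R : realType} {n : nat} {dT : measure_display}
  {T : measurableType dT} (c m d q : 'I_n -> R)
  (P : probability T R) (D : 'I_n -> T -> R) : \bar R :=
  (\int[P]_x (Gcost c m d q (fun i => D i x))%:E)%E.

From HB Require Import structures.
From mathcomp Require Import all_boot all_order all_algebra.
From mathcomp Require Import all_classical all_reals all_analysis.
From mathcomp Require Import ring lra.
Import Order.TTheory GRing.Theory Num.Theory.
Import measurable_realfun.
Local Open Scope classical_set_scope.
Local Open Scope ring_scope.

(* Each summand of G is a convex function g_i of D_i alone.  On [a_i, b_i] a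
   convex function lies below its piecewise-linear interpolant through a_i,
   mu_i and b_i, which has the form g_i mu_i + beta (y - mu_i) + gamma |y - mu_i|;
   its expectation only depends on E[D_i] = mu_i and E|D_i - mu_i| = delta_i,
   and equals E[g_i(D_i)] when D_i is supported by {a_i, mu_i, b_i}.  So the
   three-point laws maximize every summand at once.  They are all realized on
   the uniform probability of [0, 1] by the quantile functions of these laws. *)

Section interpolation.
Context {R : realFieldType}.
Implicit Types (f : R -> R) (a mu b u v y alpha beta gamma t delta : R).

Definition slope f u v : R := (f v - f u) / (v - u).

Definition affine_abs alpha beta gamma t y : R :=
  alpha + beta * (y - t) + gamma * `|y - t|.

Definition interp3 f a mu b : R -> R :=
  affine_abs (f mu) ((slope f a mu + slope f mu b) / 2)
    ((slope f mu b - slope f a mu) / 2) mu.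

Definition interp3_mean f a mu b delta : R :=
  f mu + (slope f mu b - slope f a mu) / 2 * delta.

Lemma convex_le_chord (D : set R^o) f u v y : convex_function D f ->
  D u -> D v -> u < v -> u <= y <= v -> f y <= f u + slope f u v * (y - u).
Proof.
move=> cvx Du Dv uv /andP[uy yv].
have vu0 : v - u != 0 by rewrite subr_eq0 gt_eqF.
have t0 : 0 <= (v - y) / (v - u) by rewrite divr_ge0 // subr_ge0 // ltW.
have t1 : (v - y) / (v - u) <= 1.
  by rewrite ler_pdivrMr ?subr_gt0 // mul1r lerD2l lerN2.
have := cvx (Itv01 t0 t1) u v (mem_set Du) (mem_set Dv).
set z := (X in f X <= _ -> _); have -> : z = y.
  by rewrite /z /conv /= /unstable.onem /GRing.scale /=; field.
rewrite convRE /= /unstable.onem.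
by rewrite [X in _ <= X -> _](_ : _ = f u + slope f u v * (y - u)) // /slope; field.
Qed.

Lemma interp3_left f a mu b y : y <= mu ->
  interp3 f a mu b y = f mu + slope f a mu * (y - mu).
Proof. by move=> ymu; rewrite /interp3 /affine_abs ler0_norm ?subr_le0 //; field. Qed.

Lemma interp3_right f a mu b y : mu <= y ->
  interp3 f a mu b y = f mu + slope f mu b * (y - mu).
Proof. by move=> muy; rewrite /interp3 /affine_abs ger0_norm ?subr_ge0 //; field. Qed.

Lemma convex_le_interp3 f a mu b y : convex_function (`[a, b] : set R^o) f ->
  a < mu -> mu < b -> a <= y <= b -> f y <= interp3 f a mu b y.
Proof.
move=> cvx amu mub /andP[ay yb].
have inab z : a <= z -> z <= b -> (`[a, b]%classic : set R^o) z.
  by move=> az zb; rewrite /= in_itv /= az zb.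
have [ymu|muy] := leP y mu.
- rewrite interp3_left //.
  have -> : f mu + slope f a mu * (y - mu) = f a + slope f a mu * (y - a).
    by rewrite /slope; field; rewrite subr_eq0 gt_eqF.
  by apply: (convex_le_chord _ _ _ _ _ cvx) => //;
    [apply: inab | apply: inab | apply/andP]; lra.
- rewrite interp3_right; last exact: ltW.
  by apply: (convex_le_chord _ _ _ _ _ cvx) => //;
    [apply: inab | apply: inab | apply/andP]; lra.
Qed.

Lemma three_point_mean f a mu b delta : a < mu -> mu < b ->
  f a * (delta / (2 * (mu - a)))
  + f mu * (1 - delta / (2 * (mu - a)) - delta / (2 * (b - mu)))
  + f b * (delta / (2 * (b - mu))) = interp3_mean f a mu b delta.
Proof.
move=> amu mub; rewrite /interp3_mean /slope.
by field; rewrite !subr_eq0 !gt_eqF.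
Qed.

Lemma three_point_weights_le1 a mu b delta : a < mu -> mu < b ->
  delta <= 2 * (b - mu) * (mu - a) / (b - a) ->
  delta / (2 * (mu - a)) + delta / (2 * (b - mu)) <= 1.
Proof.
move=> amu mub; rewrite ler_pdivlMr ?subr_gt0 ?(lt_trans amu) // => hdelta.
have -> : delta / (2 * (mu - a)) + delta / (2 * (b - mu)) =
    delta * (b - a) / (2 * (mu - a) * (b - mu)).
  by field; rewrite !subr_eq0 !gt_eqF.
rewrite ler_pdivrMr ?mul1r; first lra.
by rewrite mulr_gt0 ?mulr_gt0 ?subr_gt0.
Qed.

End interpolation.

Section item_cost.
Context {R : realType}.
Implicit Types (c m d q y alpha beta gamma t : R).

Definition item_cost c m d q y : R :=
  c * (d * (q - y) + (m + d) * Num.max (y - q) 0).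

Lemma item_costE c m d q y :
  item_cost c m d q y = affine_abs 0 (c * (m + d) / 2 - c * d) (c * (m + d) / 2) q y.
Proof. by rewrite /item_cost /affine_abs maxr_absE subr0 addr0; field. Qed.

Lemma convex_item_cost (D : set R^o) c m d q : 0 <= c -> 0 <= m + d ->
  convex_function D (item_cost c m d q).
Proof.
move=> c0 md0 t x y _ _; rewrite convRE /= /conv /= /GRing.scale /= /unstable.onem.
have s0 : 0 <= t%:num by apply: ge0.
have s1 : t%:num <= 1 by apply: le1.
move: (t%:num) s0 s1 => s s0 s1.
have hinge z : z - q <= Num.max (z - q) 0 /\ 0 <= Num.max (z - q) 0.
  by split; rewrite le_max lexx ?orbT.
have [hx0 hx1] := hinge x; have [hy0 hy1] := hinge y.
have hmax : Num.max (s * x + (1 - s) * y - q) 0 <=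
    s * Num.max (x - q) 0 + (1 - s) * Num.max (y - q) 0.
  by rewrite ge_max; apply/andP; split; nra.
by have := ler_wpM2l (mulr_ge0 c0 md0) hmax; rewrite /item_cost; lra.
Qed.

Lemma measurable_affine_abs alpha beta gamma t :
  measurable_fun setT (affine_abs alpha beta gamma t).
Proof.
apply: measurable_funD; first apply: measurable_funD.
- exact: measurable_cst.
- by apply: measurable_funM => //; apply: measurable_funB.
- apply: measurable_funM => //; apply: measurableT_comp => //.
  exact: measurable_funB.
Qed.

Lemma measurable_item_cost c m d q : measurable_fun setT (item_cost c m d q).
Proof.
have -> : item_cost c m d q =
    affine_abs 0 (c * (m + d) / 2 - c * d) (c * (m + d) / 2) q.
  by apply/funext => y; exact: item_costE.
exact: measurable_affine_abs.
Qed.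

End item_cost.

Section integral_EFin.
Context {dT : measure_display} {T : measurableType dT} {R : realType}.
Context {P : probability T R}.
Local Open Scope ereal_scope.
Implicit Types (f g : T -> R) (k : R).

Lemma integrable_EFinD [f g] : P.-integrable setT (EFin \o f) ->
  P.-integrable setT (EFin \o g) ->
  P.-integrable setT (fun x => (f x + g x)%:E).
Proof.
move=> intf intg.
apply: (eq_integrable measurableT (fun x => (f x)%:E + (g x)%:E)) => //.
exact: integrableD.
Qed.

Lemma integrable_EFinZ k [f] : P.-integrable setT (EFin \o f) ->
  P.-integrable setT (fun x => (k * f x)%:E).
Proof.
move=> intf; apply: (eq_integrable measurableT (fun x => k%:E * (f x)%:E)) => //.
exact: integrableZl.
Qed.

Lemma integral_EFinD [f g] : P.-integrable setT (EFin \o f) ->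
  P.-integrable setT (EFin \o g) ->
  \int[P]_x (f x + g x)%:E = \int[P]_x (f x)%:E + \int[P]_x (g x)%:E.
Proof.
by move=> intf intg; under eq_integral do rewrite EFinD; exact: integralD.
Qed.

Lemma integral_EFinZ k [f] : P.-integrable setT (EFin \o f) ->
  \int[P]_x (k * f x)%:E = k%:E * \int[P]_x (f x)%:E.
Proof. by move=> intf; under eq_integral do rewrite EFinM; exact: integralZl. Qed.

Lemma integral_EFin_cst k : \int[P]_x k%:E = k%:E.
Proof.
by rewrite integral_cst // -[RHS]mule1; congr (_ * _); exact: probability_setT.
Qed.

End integral_EFin.

Section absolute_deviation.
Context {dT : measure_display} {T : measurableType dT} {R : realType}.
Context {P : probability T R} {X : T -> R} {mu delta : R}.
Hypothesis mX : measurable_fun setT X.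
Hypothesis absdevX : (\int[P]_x (`|X x - mu|)%:E = delta%:E)%E.
Local Open Scope ereal_scope.

Lemma integrable_centered : P.-integrable setT (fun x => (X x - mu)%:E).
Proof.
apply/integrableP; split.
  by apply/measurable_EFinP; apply: measurable_funB.
by under eq_integral do rewrite abse_EFin; rewrite absdevX ltry.
Qed.

Lemma integrable_rv : P.-integrable setT (EFin \o X).
Proof.
apply: (eq_integrable measurableT (fun x => (X x - mu + mu)%:E)).
  by move=> x _; rewrite /= subrK.
exact: integrable_EFinD integrable_centered (finite_measure_integrable_cst _ _ _).
Qed.

Lemma integrable_affine_abs alpha beta gamma t :
  P.-integrable setT (fun x => (affine_abs alpha beta gamma t (X x))%:E).
Proof.
have intC k := finite_measure_integrable_cst P k measurableT.
have intXt : P.-integrable setT (EFin \o (fun x => X x - t)%R).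
  exact: integrable_EFinD integrable_rv (intC _).
exact: integrable_EFinD (integrable_EFinD (intC alpha) (integrable_EFinZ beta intXt))
  (integrable_EFinZ gamma (integrable_norm intXt)).
Qed.

Lemma integrable_item_cost c m d q :
  P.-integrable setT (EFin \o (item_cost c m d q \o X)).
Proof.
apply: (eq_integrable measurableT _ _ _
  (integrable_affine_abs 0 (c * (m + d) / 2 - c * d) (c * (m + d) / 2) q)).
by move=> x _; rewrite /= item_costE.
Qed.

Hypothesis meanX : \int[P]_x (X x)%:E = mu%:E.

Lemma integral_affine_abs alpha beta gamma :
  \int[P]_x (affine_abs alpha beta gamma mu (X x))%:E = (alpha + gamma * delta)%:E.
Proof.
have intC k := finite_measure_integrable_cst P k measurableT.
have intXmu := integrable_centered; have intAbs := integrable_norm intXmu.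
have intAff := integrable_EFinD (intC alpha) (integrable_EFinZ beta intXmu).
rewrite /affine_abs (integral_EFinD intAff (integrable_EFinZ gamma intAbs)).
rewrite (integral_EFinD (intC alpha) (integrable_EFinZ beta intXmu)).
rewrite (integral_EFinZ _ intXmu) (integral_EFinZ _ intAbs) absdevX.
rewrite (integral_EFinD integrable_rv (intC (- mu)%R)) meanX !integral_EFin_cst.
by rewrite -EFinD subrr mulr0 addr0.
Qed.

End absolute_deviation.

Section three_valued.
Context {dT : measure_display} {T : measurableType dT} {R : realType}.
Context {P : probability T R} {X : T -> R}.
Hypothesis mX : measurable_fun setT X.
Local Open Scope ereal_scope.

Lemma measurable_preimage1 (u : R) : measurable (X @^-1` [set u]).
Proof. by rewrite -[X @^-1` _]setTI; apply: mX => //; exact: measurable_set1. Qed.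

Lemma integral_indic3 (A B C : set T) (ka kb kc : R) :
  measurable A -> measurable B -> measurable C ->
  \int[P]_x (ka * \1_A x + kb * \1_B x + kc * \1_C x)%:E =
    ka%:E * P A + kb%:E * P B + kc%:E * P C.
Proof.
move=> mA mB mC.
have intIZ k E : measurable E -> P.-integrable setT (EFin \o (fun x => k * \1_E x)%R).
  by move=> mE; exact/integrable_EFinZ/integrable_indic.
have intIP k E : measurable E -> \int[P]_x (k * \1_E x)%:E = k%:E * P E.
  move=> mE; rewrite (integral_EFinZ _ (integrable_indic _ mE)).
  by rewrite integral_indic // setIT.
have intAB := integrable_EFinD (intIZ ka _ mA) (intIZ kb _ mB).
rewrite (integral_EFinD intAB (intIZ kc _ mC)).
by rewrite (integral_EFinD (intIZ ka _ mA) (intIZ kb _ mB)) !intIP.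
Qed.

Lemma ae_three_valued [u v w pu pv pw : R] : (u < v < w)%R ->
  P (X @^-1` [set u]) = pu%:E -> P (X @^-1` [set v]) = pv%:E ->
  P (X @^-1` [set w]) = pw%:E -> (pu + pv + pw = 1)%R ->
  {ae P, forall x, [\/ X x = u, X x = v | X x = w]}.
Proof.
move=> /andP[uv vw] Pu Pv Pw pS.
set S := X @^-1` [set u] `|` X @^-1` [set v] `|` X @^-1` [set w].
have [mSu mSv mSw] := And3 (measurable_preimage1 u) (measurable_preimage1 v)
  (measurable_preimage1 w).
have mS : measurable S := measurableU _ _ (measurableU _ _ mSu mSv) mSw.
have disj_uv : X @^-1` [set u] `&` X @^-1` [set v] = set0.
  by apply/seteqP; split => // x /= []; lra.
have disj_uvw : (X @^-1` [set u] `|` X @^-1` [set v]) `&` X @^-1` [set w] = set0.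
  by apply/seteqP; split => // x /= [[|]]; lra.
have PS : P S = 1.
  rewrite (measureU P (measurableU _ _ mSu mSv) mSw disj_uvw).
  rewrite (measureU P mSu mSv disj_uv).
  transitivity (pu%:E + pv%:E + pw%:E); first by congr (_ + _ + _).
  by rewrite -!EFinD pS.
have : P (~` S) = 0 by rewrite probability_setC // PS subee.
move/(negligibleP _ (measurableC mS)); apply: negligibleS.
by move=> x /= nX [[ex|ex]|ex]; apply: nX; [apply: Or31|apply: Or32|apply: Or33].
Qed.

Lemma integral_three_valued (h : R -> R) (u v w pu pv pw : R) :
  measurable_fun setT h -> (u < v < w)%R ->
  P (X @^-1` [set u]) = pu%:E -> P (X @^-1` [set v]) = pv%:E ->
  P (X @^-1` [set w]) = pw%:E -> (pu + pv + pw = 1)%R ->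
  \int[P]_x (h (X x))%:E = (h u * pu + h v * pv + h w * pw)%:E.
Proof.
move=> mh uvw Pu Pv Pw pS.
have [mSu mSv mSw] := And3 (measurable_preimage1 u) (measurable_preimage1 v)
  (measurable_preimage1 w).
rewrite (ae_eq_integral (fun x => (h u * \1_(X @^-1` [set u]) x
  + h v * \1_(X @^-1` [set v]) x + h w * \1_(X @^-1` [set w]) x)%:E)) //.
- by rewrite integral_indic3 // Pu Pv Pw.
- exact/measurable_EFinP/measurableT_comp.
- apply/measurable_EFinP; apply: measurable_funD; first apply: measurable_funD.
  + exact: (measurable_funM (measurable_cst (h u)) (measurable_indic mSu)).
  + exact: (measurable_funM (measurable_cst (h v)) (measurable_indic mSv)).
  + exact: (measurable_funM (measurable_cst (h w)) (measurable_indic mSw)).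
move/andP: (uvw) => [uv vw].
move: (ae_three_valued uvw Pu Pv Pw pS); apply: filterS => x Xx _.
have notin z : X x <> z -> (x \in X @^-1` [set z]) = false := @memNset _ _ _.
have isin z : X x = z -> (x \in X @^-1` [set z]) = true := @mem_set _ _ _.
rewrite !indicE.
case: Xx => ex; [rewrite (isin u) | rewrite (isin v) | rewrite (isin w)] => //.
all: by rewrite !notin ex ?mulr1 ?mulr0 ?addr0 ?add0r //; lra.
Qed.

End three_valued.

Section ae_le_integral.
Context {dT : measure_display} {T : measurableType dT} {R : realType}.
Variable mu : {measure set T -> \bar R}.
Local Open Scope ereal_scope.

Lemma ae_le_integral (D : set T) (f g : T -> \bar R) : measurable D ->
  mu.-integrable D f -> mu.-integrable D g ->
  {ae mu, forall x, D x -> f x <= g x} ->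
  \int[mu]_(x in D) f x <= \int[mu]_(x in D) g x.
Proof.
move=> mD intf intg [N [mN muN fgN]].
rewrite (negligible_integral mN mD intf muN) (negligible_integral mN mD intg muN).
have mDN : measurable (D `\` N) by exact: measurableD.
apply: le_integral => //; [exact: integrableS intf | exact: integrableS intg |].
move=> x; rewrite inE => -[Dx Nx].
by apply: contrapT => fgx; apply: Nx; apply: fgN => /(_ Dx).
Qed.

End ae_le_integral.

Section expectation_of_convex.
Context {dT : measure_display} {T : measurableType dT} {R : realType}.
Context {P : probability T R} {X : T -> R} {a mu b delta : R}.
Hypothesis mX : measurable_fun setT X.
Hypotheses (amu : a < mu) (mub : mu < b).
Local Open Scope ereal_scope.

Lemma expectation_convex_le (f : R -> R) :
  convex_function (`[a, b]%classic : set R^o) f ->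
  \int[P]_x (X x)%:E = mu%:E -> \int[P]_x (`|X x - mu|)%:E = delta%:E ->
  {ae P, forall x, (a <= X x <= b)%R} ->
  P.-integrable setT (EFin \o (f \o X)) ->
  \int[P]_x (f (X x))%:E <= (interp3_mean f a mu b delta)%:E.
Proof.
move=> cvx meanX absdevX Xab intfX.
rewrite -(integral_affine_abs mX absdevX meanX _ ((slope f a mu + slope f mu b) / 2)).
apply: ae_le_integral => //; first exact: integrable_affine_abs mX absdevX _ _ _ _.
move: Xab; apply: filterS => x Xabx _; rewrite lee_fin.
exact: convex_le_interp3.
Qed.

Lemma expectation_three_point (f : R -> R) : measurable_fun setT f ->
  P (X @^-1` [set a]) = (delta / (2 * (mu - a)))%:E ->
  P (X @^-1` [set mu]) =
    (1 - delta / (2 * (mu - a)) - delta / (2 * (b - mu)))%:E ->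
  P (X @^-1` [set b]) = (delta / (2 * (b - mu)))%:E ->
  \int[P]_x (f (X x))%:E = (interp3_mean f a mu b delta)%:E.
Proof.
move=> mf Pa Pmu Pb.
rewrite (integral_three_valued mX f _ _ _ _ _ _ mf _ Pa Pmu Pb).
- by rewrite three_point_mean.
- by rewrite amu mub.
- by ring.
Qed.

End expectation_of_convex.

Definition three_point_quantile {R : realType} (a mu b pa pb : R) (x : R) : R :=
  mu + (a - mu) * \1_(`[0, pa[ : set R) x + (b - mu) * \1_(`]1 - pb, 1] : set R) x.

Section three_point_construction.
Context {R : realType} {a mu b pa pb : R}.
Hypothesis pab : pa + pb <= 1.
Local Notation X := (three_point_quantile a mu b pa pb).
Local Notation U := (uniform_prob (@ltr01 R)).
Let A : set R := `[0, pa[.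
Let B : set R := `]1 - pb, 1].

Lemma uniform01E (S : set R) : measurable S -> S `<=` `[0, 1] ->
  U S = lebesgue_measure S.
Proof.
move=> mS S01; rewrite /uniform_prob integral_uniform_pdf setIidl //.
rewrite (eq_integral (fun _ => 1%:E)); last first.
  move=> x; rewrite inE => /S01; rewrite /= in_itv /= /uniform_pdf => ->.
  by rewrite subr0 invr1.
by rewrite integral_cst // mul1e.
Qed.

Lemma measurable_three_point_quantile : measurable_fun setT X.
Proof.
apply: measurable_funD; first apply: measurable_funD.
- exact: measurable_cst.
- exact: measurable_funM (measurable_cst (a - mu)) (measurable_indic (measurable_itv _)).
- exact: measurable_funM (measurable_cst (b - mu)) (measurable_indic (measurable_itv _)).
Qed.

Lemma disjoint_quantile_sets : A `&` B = set0.
Proof.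
apply/seteqP; split => // x []; rewrite /A /B /= !in_itv /= => /andP[_ xpa] /andP[pbx _].
by have := lt_trans pbx xpa; rewrite ltrBlDr ltNge pab.
Qed.

Lemma three_point_quantileE x :
  X x = if x \in A then a else if x \in B then b else mu.
Proof.
rewrite /three_point_quantile !indicE -/A -/B.
have [xA|xA] := boolP (x \in A); have [xB|xB] := boolP (x \in B) => /=.
- have : (A `&` B) x by split; exact: set_mem.
  by rewrite disjoint_quantile_sets.
- by ring.
- by ring.
- by ring.
Qed.

Lemma three_point_quantile_preimage_a : a < mu -> mu < b -> X @^-1` [set a] = A.
Proof.
move=> amu mub; apply/seteqP; split => x /=; rewrite three_point_quantileE.
- by case: ifPn => [/set_mem // | _]; case: ifPn => _ e; exfalso; lra.
- by move=> xA; rewrite (mem_set xA).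
Qed.

Lemma three_point_quantile_preimage_b : a < mu -> mu < b -> X @^-1` [set b] = B.
Proof.
move=> amu mub; apply/seteqP; split => x /=; rewrite three_point_quantileE.
- case: ifPn => [_ e|_]; first by exfalso; lra.
  by case: ifPn => [/set_mem // | _ e]; exfalso; lra.
- move=> xB; rewrite (mem_set xB) ifN //; apply/negP => /set_mem xA.
  by have : (A `&` B) x by []; rewrite disjoint_quantile_sets.
Qed.

Lemma three_point_quantile_preimage_mu : a < mu -> mu < b ->
  X @^-1` [set mu] = ~` (A `|` B).
Proof.
move=> amu mub; apply/seteqP; split => x /=; rewrite three_point_quantileE.
- case: ifPn => [_ e|/negP xA]; first by exfalso; lra.
  case: ifPn => [_ e|/negP xB _]; first by exfalso; lra.
  by case=> [/mem_set|/mem_set].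
- by move=> nAB; rewrite !ifN //; apply/negP => /set_mem ?; apply: nAB; [right|left].
Qed.

Lemma three_point_quantile_law : 0 <= pa -> 0 <= pb -> a < mu -> mu < b ->
  [/\ U (X @^-1` [set a]) = pa%:E, U (X @^-1` [set mu]) = (1 - pa - pb)%:E
    & U (X @^-1` [set b]) = pb%:E].
Proof.
move=> pa0 pb0 amu mub.
have mA : measurable A by exact: measurable_itv.
have mB : measurable B by exact: measurable_itv.
have UA : U A = pa%:E.
  rewrite uniform01E //; last first.
    move=> x; rewrite /A /= !in_itv /= => /andP[-> xpa] /=.
    by rewrite (le_trans (ltW xpa)) // (le_trans _ pab) // lerDl.
  rewrite /A lebesgue_measure_itv /= lte_fin.
  have [_|pa_le0] := ltP 0 pa; first by rewrite -EFinD subr0.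
  by have -> : pa = 0 by apply/le_anti; rewrite pa_le0 pa0.
have UB : U B = pb%:E.
  rewrite uniform01E //; last first.
    move=> x; rewrite /B /= !in_itv /= => /andP[pbx ->]; rewrite andbT.
    by rewrite (le_trans _ (ltW pbx)) // subr_ge0 (le_trans _ pab) // lerDr.
  rewrite /B lebesgue_measure_itv /= lte_fin gtrBl.
  have [_|pb_le0] := ltP 0 pb; first by rewrite -EFinD opprB addrC subrK.
  by have -> : pb = 0 by apply/le_anti; rewrite pb_le0 pb0.
rewrite three_point_quantile_preimage_a // three_point_quantile_preimage_b // UA UB.
split => //; rewrite three_point_quantile_preimage_mu // probability_setC; last first.
  exact: measurableU.
rewrite measureU //; last exact: disjoint_quantile_sets.
transitivity (1 - (pa%:E + pb%:E))%E; first by congr (1 - (_ + _))%E.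
by rewrite -EFinD opprD addrA.
Qed.

End three_point_construction.

Section three_point_in_class.
Context {R : realType} {a mu b delta : R}.
Local Notation pa := (delta / (2 * (mu - a))).
Local Notation pb := (delta / (2 * (b - mu))).
Local Notation X := (three_point_quantile a mu b pa pb).
Local Notation U := (uniform_prob (@ltr01 R)).

Lemma three_point_quantile_in_class : a < mu -> mu < b -> 0 < delta ->
  delta <= 2 * (b - mu) * (mu - a) / (b - a) ->
  [/\ measurable_fun setT X, (\int[U]_x (X x)%:E = mu%:E)%E,
      (\int[U]_x (`|X x - mu|)%:E = delta%:E)%E & {ae U, forall x, a <= X x <= b}]
  /\ [/\ U (X @^-1` [set a]) = pa%:E, U (X @^-1` [set mu]) = (1 - pa - pb)%:E
       & U (X @^-1` [set b]) = pb%:E].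
Proof.
move=> amu mub delta0 hdelta.
have pa0 : 0 <= pa by rewrite divr_ge0 ?ltW ?mulr_gt0 ?subr_gt0.
have pb0 : 0 <= pb by rewrite divr_ge0 ?ltW ?mulr_gt0 ?subr_gt0.
have pab : pa + pb <= 1 by exact: three_point_weights_le1.
have mX : measurable_fun setT X := measurable_three_point_quantile.
have [Pa Pmu Pb] := three_point_quantile_law pab pa0 pb0 amu mub.
have expectE f mf := expectation_three_point (P := U) mX amu mub f mf Pa Pmu Pb.
split=> //; split=> //.
- rewrite (expectE id) // /interp3_mean /slope !divff ?subr_eq0 ?gt_eqF //.
  by rewrite subrr mul0r mul0r addr0.
- rewrite (expectE (fun y => `|y - mu|)); last first.
    by apply: measurableT_comp => //; exact: measurable_funB.
  rewrite /interp3_mean /slope subrr normr0 [`|a - mu|]distrC !gtr0_norm ?subr_gt0 //.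
  by congr (_%:E); field; rewrite !subr_eq0 !gt_eqF.
- apply: aeW => x; rewrite three_point_quantileE //.
  by repeat case: ifP => _; apply/andP; split; lra.
Qed.

End three_point_in_class.

Lemma exp_cost_sum {R : realType} {n : nat} {dT : measure_display}
    {T : measurableType dT} (c m d q : 'I_n -> R) [a mu b delta : 'I_n -> R]
    [P : probability T R] [D : 'I_n -> T -> R] :
  in_Pmudelta a mu b delta P D ->
  exp_cost c m d q P D =
    (\sum_(i < n) \int[P]_x (item_cost (c i) (m i) (d i) (q i) (D i x))%:E)%E.
Proof.
move=> PD; rewrite /exp_cost -integral_sum //; last first.
  by move=> i; have [mD _ absdevD _] := PD i; exact: (integrable_item_cost mD absdevD (c i) (m i) (d i) (q i)).
by apply: eq_integral => x _; rewrite sumEFin.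
Qed.

Theorem lemma2 (R : realType) (n : nat) (hn : (1 <= n)%N)
  (c m d a mu b delta : 'I_n -> R)
  (hc : forall i, 0 < c i) (hm : forall i, 0 < m i) (hd : forall i, 0 < d i)
  (ha : forall i, 0 <= a i) (hamu : forall i, a i < mu i)
  (hmub : forall i, mu i < b i)
  (hdelta0 : forall i, 0 < delta i)
  (hdelta1 : forall i,
      delta i <= 2 * (b i - mu i) * (mu i - a i) / (b i - a i))
  (q : 'I_n -> R) :
  (exists (dT : measure_display) (T : measurableType dT)
          (Ps : probability T R) (Ds : 'I_n -> T -> R),
      in_Pmudelta a mu b delta Ps Ds /\ three_point a mu b delta Ps Ds)
  /\
  (forall (dT : measure_display) (T : measurableType dT)
          (Ps : probability T R) (Ds : 'I_n -> T -> R),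
      in_Pmudelta a mu b delta Ps Ds -> three_point a mu b delta Ps Ds ->
      forall (dT' : measure_display) (T' : measurableType dT')
             (P : probability T' R) (D : 'I_n -> T' -> R),
        in_Pmudelta a mu b delta P D ->
        (exp_cost c m d q P D <= exp_cost c m d q Ps Ds)%E).
Proof.
split.
  exists _, _, (uniform_prob (@ltr01 R)), (fun i => three_point_quantile (a i) (mu i)
    (b i) (delta i / (2 * (mu i - a i))) (delta i / (2 * (b i - mu i)))).
  split=> i; have [] := three_point_quantile_in_class (hamu i) (hmub i) (hdelta0 i)
    (hdelta1 i) => //.
move=> dT T Ps Ds PsDs threeDs dT' T' P D PD.
rewrite (exp_cost_sum c m d q PD) (exp_cost_sum c m d q PsDs).
apply: lee_sum => i _.
have [mD meanD absdevD boundsD] := PD i.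
have [mDs _ _ _] := PsDs i; have [Pa Pmu Pb] := threeDs i.
rewrite (expectation_three_point mDs (hamu i) (hmub i) _ (measurable_item_cost _ _ _ _)
  Pa Pmu Pb).
apply: (expectation_convex_le mD (hamu i) (hmub i) _ _ meanD absdevD boundsD).
- by apply: convex_item_cost; rewrite ?addr_ge0 ?ltW.
- exact: (integrable_item_cost mD absdevD (c i) (m i) (d i) (q i)).
Qed.
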